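(* Let $\vec w=(w_1,\dots,w_{N})$ be a weight tensor with $N=N_{\vec w}$ elements and initial values $\vec w^{(1)}$, quantized with a static (fixed over iterations) clipping scalar $s$ with $0<s<\max_j|w^{(1)}_j|$. Suppose the weights are trained by gradient-based updates $w_j^{(i+1)}=w_j^{(i)}-\eta_i\,\Delta^{(\mathrm{PWL})}w_j^{(i)}$, where the piece-wise linear (PWL) gradient estimate satisfies $\Delta^{(\mathrm{PWL})}w_j^{(i)}=G_j^{(i)}\cdot\mathbb{1}_{\{|w_j^{(i)}|\le s\}}$ for some upstream gradient values $G_j^{(i)}$. Let $\tilde N^{(i)}_{\vec w}=\#\{j:|w^{(i)}_j|\le s\}$ be the number of parameters learned (receiving a possibly nonzero update) at iteration $i$. Then for every iteration $i$, $$N_{\vec w}>\tilde N^{(i)}_{\vec w}\ge\tilde N^{(i+1)}_{\vec w}.$$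
   Context: The PWL estimator replaces the derivative of the clipped quantizer $\mathbb{Q}(x)=\mathrm{clip}(s\,2^{1-B}\mathrm{round}(x2^{B-1}/s),-s,s)$ by $\mathbb{1}_{\{x\in[-s,s]\}}$, so weights whose magnitude exceeds $s$ receive zero gradient. *)

From mathcomp Require Import all_boot all_order all_algebra.
Set Implicit Arguments. Unset Strict Implicit. Unset Printing Implicit Defensive.
Import Order.TTheory GRing.Theory Num.Theory.
Local Open Scope ring_scope.

Definition pwl_grad (R : realFieldType) (s w g : R) : R :=
  if `|w| <= s then g else 0.

Definition n_learned (R : realFieldType) (N : nat) (s : R) (w : 'I_N -> R) : nat :=
  #|[set j : 'I_N | `|w j| <= s]|.

(* A weight with |w| > s receives a zero PWL gradient, so it is not updated
   and stays outside [-s, s] forever.  Hence the set of learned weights can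
   only shrink from one iteration to the next, and the weight that starts
   outside [-s, s] is never learned, so that set is always a proper subset. *)
From mathcomp Require Import all_boot all_order all_algebra.
Set Implicit Arguments. Unset Strict Implicit. Unset Printing Implicit Defensive.
Import Order.TTheory GRing.Theory Num.Theory.
Local Open Scope ring_scope.

Lemma pwl_grad_clipped (R : realFieldType) (s w g : R) :
  s < `|w| -> pwl_grad s w g = 0.
Proof. by rewrite /pwl_grad leNgt => ->. Qed.

Lemma n_learned_lt (R : realFieldType) (N : nat) (s : R) (w : 'I_N -> R) :
  (exists j, s < `|w j|) -> (n_learned s w < N)%N.
Proof.
case=> j0 clipped_j0; rewrite /n_learned -[X in (_ < X)%N]card_ord.
apply/proper_card/properP; split; first exact: subset_predT.
by exists j0; rewrite // inE -ltNge.
Qed.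

Lemma n_learned_le (R : realFieldType) (N : nat) (s : R) (w w' : 'I_N -> R) :
  (forall j, s < `|w j| -> s < `|w' j|) ->
  (n_learned s w' <= n_learned s w)%N.
Proof.
move=> clipped_stays; apply/subset_leq_card/subsetP => j.
by rewrite !inE !leNgt; apply: contra; apply: clipped_stays.
Qed.

Section PWLTraining.

Variables (R : realFieldType) (N : nat) (s : R).
Variables (w : nat -> 'I_N -> R) (eta : nat -> R) (G : nat -> 'I_N -> R).
Hypothesis pwl_update : forall (i : nat) (j : 'I_N), (1 <= i)%N ->
  w i.+1 j = w i j - eta i * pwl_grad s (w i j) (G i j).

Lemma clipped_weight_frozen i j :
  (1 <= i)%N -> s < `|w i j| -> w i.+1 j = w i j.
Proof.
by move=> i_ge1 clipped; rewrite pwl_update // pwl_grad_clipped // mulr0 subr0.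
Qed.

Lemma clipped_weight_stays_clipped i j :
  (1 <= i)%N -> s < `|w i j| -> s < `|w i.+1 j|.
Proof. by move=> i_ge1 clipped; rewrite clipped_weight_frozen. Qed.

Lemma clipped_weight_clipped_forever j :
  s < `|w 1%N j| -> forall i, (1 <= i)%N -> s < `|w i j|.
Proof.
move=> clipped1; elim=> [//|[|i] IH _ //].
exact: clipped_weight_stays_clipped (IH _).
Qed.

End PWLTraining.

Theorem proposition2 (R : realFieldType) (N : nat) (s : R)
    (w : nat -> 'I_N -> R) (eta : nat -> R) (G : nat -> 'I_N -> R) :
  0 < s ->
  (exists j : 'I_N, s < `|w 1%N j|) ->
  (forall (i : nat) (j : 'I_N), (1 <= i)%N ->
      w i.+1 j = w i j - eta i * pwl_grad s (w i j) (G i j)) ->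
  forall i : nat, (1 <= i)%N ->
    (n_learned s (w i) < N)%N /\
    (n_learned s (w i.+1) <= n_learned s (w i))%N.
Proof.
move=> _ [j0 clipped_j0] pwl_update i i_ge1; split.
  apply: n_learned_lt; exists j0.
  exact: (clipped_weight_clipped_forever pwl_update clipped_j0).
apply: n_learned_le => j.
exact: (clipped_weight_stays_clipped pwl_update).
Qed.
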